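(* Let $p\ge1$ and $n>p$ be integers, and let $\Lambda\in\mathbb R$. Let $z\in C^{2n}[-1,1]$ be a real even function such that: - $L^{2n}(\Lambda)z=0$ on $[-1,1]$, and - $z^{(j)}(\pm1)=0$ for $j=0,\dots,n-1$. Then $c:=L^{2n-2}(\Lambda)z$ is a constant function on $[-1,1]$. If $c=0$, then $z\equiv0$.
   Context: For an integer $k\ge p$ and real $\Lambda$, the differential operator $L^{2k}(\Lambda)$ on $[-1,1]$ is $$L^{2k}(\Lambda)=(-1)^k\frac{d^{2k}}{dx^{2k}}-\Lambda(-1)^{k-p}\frac{d^{2k-2p}}{dx^{2k-2p}}.$$ The constant $c$ is called the ''stone'' of $z$. *)

From Stdlib Require Import Reals Lra Lia.
Open Scope R_scope.

Definition I11 (x : R) : Prop := -1 <= x <= 1.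

(* Derivative of f at x relative to the domain D (one-sided at endpoints of
   an interval): lim_{y -> x, y in D, y <> x} (f y - f x)/(y - x) = l. *)
Definition deriv_within (D : R -> Prop) (f : R -> R) (x l : R) : Prop :=
  limit1_in (fun y => (f y - f x) / (y - x)) (fun y => D y /\ y <> x) l x.

Definition cont_within (D : R -> Prop) (f : R -> R) (x : R) : Prop :=
  limit1_in f D (f x) x.

Definition is_Ck_derivs (D : R -> Prop) (k : nat) (f : R -> R)
  (d : nat -> R -> R) : Prop :=
  (forall x, D x -> d 0%nat x = f x) /\
  (forall j x, (j < k)%nat -> D x -> deriv_within D (d j) x (d (S j) x)) /\
  (forall x, D x -> cont_within D (d k) x).

(* L^{2k}(Lambda) applied to a function with derivative family d, at x:
   (-1)^k d^{(2k)} - Lambda (-1)^{k-p} d^{(2k-2p)}. *)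
Definition Lop (p k : nat) (Lambda : R) (d : nat -> R -> R) (x : R) : R :=
  (-1) ^ k * d (2 * k)%nat x - Lambda * (-1) ^ (k - p) * d (2 * k - 2 * p)%nat x.

(* Differentiating g := L^{2n-2}(Lambda) z twice gives -L^{2n}(Lambda) z = 0, so g is
   affine; the derivatives of the even function z have parity (-1)^j, so g is even,
   hence constant.  If that constant vanishes, z solves L^{2m}(Lambda) z = 0 with
   m = n - 1 and z^(j)(+-1) = 0 for j <= m.  A combination W of the energy identity
   (multiplier z) and the Pohozaev identity (multiplier x z') vanishes at +-1 and
   satisfies W' = (m - k) (z^(m))^2 >= 0 with k = m - p < m; so W = 0 and z^(m) = 0,
   and the boundary conditions propagate this down to z = 0. *)

From Stdlib Require Import Reals Lra Lia.
Open Scope R_scope.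

Lemma limit1_in_ext (f g : R -> R) D l x0 :
  (forall y, D y -> f y = g y) -> limit1_in f D l x0 -> limit1_in g D l x0.
Proof.
  intros Hfg Hf eps Heps.
  destruct (Hf eps Heps) as [alp [Halp Hclose]].
  exists alp; split; [exact Halp|].
  intros y [Dy Hy]; rewrite <- Hfg by exact Dy; apply Hclose; auto.
Qed.

Lemma deriv_within_eq_val D f x l l' :
  deriv_within D f x l -> l = l' -> deriv_within D f x l'.
Proof. now intros H <-. Qed.

Lemma deriv_within_ext D f g x l :
  (forall y, D y -> f y = g y) -> D x ->
  deriv_within D f x l -> deriv_within D g x l.
Proof.
  intros Hfg Dx. apply limit1_in_ext.
  intros y [Dy _]. now rewrite !Hfg.
Qed.

Lemma deriv_within_limit D f x l : deriv_within D f x l ->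
  limit1_in f (fun y => D y /\ y <> x) (f x) x.
Proof.
  intros H. set (D' := fun y => D y /\ y <> x).
  assert (L := limit_plus _ _ _ _ _ _ (limit_free f D' x x)
     (limit_mul _ _ _ _ _ _ H
        (limit_minus _ _ _ _ _ _ (lim_x D' x) (limit_free (fun t => t) D' x x)))).
  replace (f x) with (f x + l * (x - x)) by ring.
  eapply limit1_in_ext; [|exact L].
  intros y [_ Hy]. field. intro E; apply Hy; lra.
Qed.

Lemma deriv_within_cont D f x l : deriv_within D f x l -> cont_within D f x.
Proof.
  intros H eps Heps.
  destruct (deriv_within_limit D f x l H eps Heps) as [alp [Halp Hclose]].
  exists alp; split; [exact Halp|].
  intros y [Dy Hy]. destruct (Req_dec y x) as [->|Hne].
  - simpl; unfold Rdist; rewrite Rminus_diag, Rabs_R0; lra.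
  - apply Hclose; auto.
Qed.

Lemma deriv_within_const D c x : deriv_within D (fun _ => c) x 0.
Proof.
  eapply limit1_in_ext; [|apply (limit_free (fun _ => 0) _ x x)].
  intros y _; unfold Rdiv; ring.
Qed.

Lemma deriv_within_id D x : deriv_within D (fun t => t) x 1.
Proof.
  eapply limit1_in_ext; [|apply (limit_free (fun _ => 1) _ x x)].
  intros y [_ Hy]; field. intro E; apply Hy; lra.
Qed.

Lemma deriv_within_plus D f g x lf lg :
  deriv_within D f x lf -> deriv_within D g x lg ->
  deriv_within D (fun t => f t + g t) x (lf + lg).
Proof.
  intros Hf Hg. eapply limit1_in_ext; [|exact (limit_plus _ _ _ _ _ _ Hf Hg)].
  intros y [_ Hy]; field. intro E; apply Hy; lra.
Qed.

Lemma deriv_within_minus D f g x lf lg :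
  deriv_within D f x lf -> deriv_within D g x lg ->
  deriv_within D (fun t => f t - g t) x (lf - lg).
Proof.
  intros Hf Hg. eapply limit1_in_ext; [|exact (limit_minus _ _ _ _ _ _ Hf Hg)].
  intros y [_ Hy]; field. intro E; apply Hy; lra.
Qed.

Lemma deriv_within_mult D f g x lf lg :
  deriv_within D f x lf -> deriv_within D g x lg ->
  deriv_within D (fun t => f t * g t) x (f x * lg + g x * lf).
Proof.
  intros Hf Hg. set (D' := fun y => D y /\ y <> x).
  assert (L := limit_plus _ _ _ _ _ _
     (limit_mul _ _ _ _ _ _ (deriv_within_limit _ _ _ _ Hf) Hg)
     (limit_mul _ _ _ _ _ _ (limit_free g D' x x) Hf)).
  eapply limit1_in_ext; [|exact L].
  intros y [_ Hy]; field. intro E; apply Hy; lra.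
Qed.

Lemma deriv_within_scal D c f x l :
  deriv_within D f x l -> deriv_within D (fun t => c * f t) x (c * l).
Proof.
  intros Hf. eapply deriv_within_eq_val.
  - exact (deriv_within_mult D (fun _ => c) f x 0 l (deriv_within_const D c x) Hf).
  - cbv beta; ring.
Qed.

Definition segment (a b x : R) : Prop := a <= x <= b.

Section Segment.

Variables a b : R.
Hypothesis ab : a < b.

Lemma segment_adherent x : segment a b x -> adhDa (fun y => segment a b y /\ y <> x) x.
Proof.
  unfold segment; intros Hx alp Halp.
  set (e := Rmin (alp / 2) ((b - a) / 2)).
  assert (He : 0 < e) by (apply Rmin_pos; lra).
  assert (He1 : e <= alp / 2) by apply Rmin_l.
  assert (He2 : e <= (b - a) / 2) by apply Rmin_r.
  destruct (Rle_dec x ((a + b) / 2)).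
  - exists (x + e). split; [lra|]. unfold R_dist.
    replace (x + e - x) with e by ring. rewrite Rabs_right; lra.
  - exists (x - e). split; [lra|]. unfold R_dist.
    replace (x - e - x) with (- e) by ring. rewrite Rabs_Ropp, Rabs_right; lra.
Qed.

Lemma deriv_within_segment_unique f x l1 l2 : segment a b x ->
  deriv_within (segment a b) f x l1 -> deriv_within (segment a b) f x l2 -> l1 = l2.
Proof. intros Hx. apply single_limit, segment_adherent, Hx. Qed.

Lemma deriv_within_segment_interior f x l : a < x < b ->
  deriv_within (segment a b) f x l -> derivable_pt_lim f x l.
Proof.
  intros Hx Hf eps Heps. destruct (Hf eps Heps) as [alp [Halp Hclose]].
  set (del := Rmin alp (Rmin (b - x) (x - a))).
  assert (Hdel : 0 < del) by (repeat apply Rmin_pos; lra).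
  assert (H1 : del <= alp) by apply Rmin_l.
  assert (H2 : del <= Rmin (b - x) (x - a)) by apply Rmin_r.
  assert (H3 := Rmin_l (b - x) (x - a)). assert (H4 := Rmin_r (b - x) (x - a)).
  exists (mkposreal _ Hdel). intros h Hh Hlt. simpl in Hlt.
  apply Rabs_def2 in Hlt.
  specialize (Hclose (x + h)). simpl in Hclose. unfold R_dist in Hclose.
  replace (x + h - x) with h in Hclose by ring. apply Hclose.
  split; [split; [unfold segment; lra | intro E; apply Hh; lra]|].
  apply Rabs_def1; lra.
Qed.

Lemma segment_nondecreasing f f' :
  (forall x, segment a b x -> deriv_within (segment a b) f x (f' x)) ->
  (forall x, segment a b x -> 0 <= f' x) ->
  forall x y, segment a b x -> segment a b y -> x <= y -> f x <= f y.
Proof.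
  intros Hd Hpos.
  assert (Hinner : forall u v, a < u -> u < v -> v < b -> f u <= f v).
  { intros u v Hu Huv Hv. destruct (MVT_cor2 f f' u v Huv) as [c [Hmvt Hc]].
    - intros c Hc. apply deriv_within_segment_interior; [lra|].
      apply Hd. unfold segment; lra.
    - assert (0 <= f' c) by (apply Hpos; unfold segment; lra).
      assert (0 <= f' c * (v - u)) by (apply Rmult_le_pos; lra). lra. }
  (* at the ends of the segment, pass to the limit by continuity *)
  intros x y Hx Hy Hxy. destruct (Req_dec x y) as [->|Hne]; [lra|].
  apply Rnot_lt_le; intro Hlt.
  set (eps := (f x - f y) / 2).
  assert (Heps : eps > 0) by (unfold eps; lra).
  destruct (deriv_within_cont _ _ _ _ (Hd x Hx) eps Heps) as [a1 [Ha1 Hx1]].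
  destruct (deriv_within_cont _ _ _ _ (Hd y Hy) eps Heps) as [a2 [Ha2 Hy2]].
  set (e1 := Rmin (a1 / 2) ((y - x) / 4)). set (e2 := Rmin (a2 / 2) ((y - x) / 4)).
  assert (0 < e1) by (apply Rmin_pos; lra). assert (0 < e2) by (apply Rmin_pos; lra).
  assert (e1 <= a1 / 2) by apply Rmin_l. assert (e1 <= (y - x) / 4) by apply Rmin_r.
  assert (e2 <= a2 / 2) by apply Rmin_l. assert (e2 <= (y - x) / 4) by apply Rmin_r.
  unfold segment in *.
  assert (A : Rabs (f (x + e1) - f x) < eps).
  { apply (Hx1 (x + e1)). split; [lra|]. simpl; unfold R_dist. apply Rabs_def1; lra. }
  assert (B : Rabs (f (y - e2) - f y) < eps).
  { apply (Hy2 (y - e2)). split; [lra|]. simpl; unfold R_dist. apply Rabs_def1; lra. }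
  apply Rabs_def2 in A. apply Rabs_def2 in B.
  assert (f (x + e1) <= f (y - e2)) by (apply Hinner; lra).
  unfold eps in *; lra.
Qed.

Lemma segment_const_of_deriv0 f :
  (forall x, segment a b x -> deriv_within (segment a b) f x 0) ->
  forall x y, segment a b x -> segment a b y -> f x = f y.
Proof.
  intros Hd.
  assert (Hup := segment_nondecreasing f (fun _ => 0) Hd (fun _ _ => Rle_refl 0)).
  assert (Hdown : forall x, segment a b x -> deriv_within (segment a b) (fun t => - f t) x (- 0)).
  { intros x Hx. eapply limit1_in_ext; [|exact (limit_Ropp _ _ _ _ (Hd x Hx))].
    intros y _; unfold Rdiv; ring. }
  assert (Hdn := segment_nondecreasing _ (fun _ => - 0) Hdown (fun _ _ => ltac:(lra))).
  intros x y Hx Hy. destruct (Rle_dec x y).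
  - assert (A := Hup x y Hx Hy r). assert (B := Hdn x y Hx Hy r). lra.
  - assert (A := Hup y x Hy Hx ltac:(lra)). assert (B := Hdn y x Hy Hx ltac:(lra)). lra.
Qed.

Lemma segment_affine_of_deriv2_zero f f' :
  (forall x, segment a b x -> deriv_within (segment a b) f x (f' x)) ->
  (forall x, segment a b x -> deriv_within (segment a b) f' x 0) ->
  exists s c, forall x, segment a b x -> f x = s * x + c.
Proof.
  intros Hf Hf'.
  assert (Hb : segment a b b) by (unfold segment; lra).
  assert (Hslope : forall x, segment a b x -> f' x = f' b)
    by (intros x Hx; exact (segment_const_of_deriv0 f' Hf' x b Hx Hb)).
  assert (Hrest : forall x, segment a b x ->
    deriv_within (segment a b) (fun y => f y - f' b * y) x 0).
  { intros x Hx. eapply deriv_within_eq_val.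
    - apply deriv_within_minus; [exact (Hf x Hx)|apply deriv_within_scal, deriv_within_id].
    - rewrite Hslope by exact Hx; ring. }
  exists (f' b), (f b - f' b * b). intros x Hx.
  assert (E := segment_const_of_deriv0 _ Hrest x b Hx Hb). cbv beta in E. lra.
Qed.

Lemma segment_deriv_nonneg_zero_ends W w :
  (forall x, segment a b x -> deriv_within (segment a b) W x (w x)) ->
  (forall x, segment a b x -> 0 <= w x) ->
  W a = 0 -> W b = 0 -> forall x, segment a b x -> w x = 0.
Proof.
  intros Hd Hpos Ha Hb x Hx.
  assert (Sa : segment a b a) by (unfold segment; lra).
  assert (Sb : segment a b b) by (unfold segment; lra).
  assert (HW : forall y, segment a b y -> W y = 0).
  { intros y Hy.
    assert (A := segment_nondecreasing W w Hd Hpos a y Sa Hy ltac:(unfold segment in Hy; lra)).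
    assert (B := segment_nondecreasing W w Hd Hpos y b Hy Sb ltac:(unfold segment in Hy; lra)).
    lra. }
  apply (deriv_within_segment_unique W x); [exact Hx|exact (Hd x Hx)|].
  apply (deriv_within_ext _ (fun _ => 0)); [intros y Hy; rewrite HW by exact Hy; reflexivity|exact Hx|].
  apply deriv_within_const.
Qed.

End Segment.

Fixpoint sum_lt (r : nat) (F : nat -> R) : R :=
  match r with O => 0 | S r' => sum_lt r' F + F r' end.

Lemma sum_lt_ext r F G : (forall i, (i < r)%nat -> F i = G i) -> sum_lt r F = sum_lt r G.
Proof. induction r as [|r IH]; simpl; intros H; [reflexivity|]. rewrite IH, H; auto. Qed.

Lemma sum_lt_zero r F : (forall i, (i < r)%nat -> F i = 0) -> sum_lt r F = 0.
Proof. induction r as [|r IH]; simpl; intros H; [reflexivity|]. rewrite IH, H; auto. ring. Qed.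

Lemma sum_lt_telescope r u : sum_lt r (fun i => u i - u (S i)) = u 0%nat - u r.
Proof. induction r as [|r IH]; simpl; [ring|]. rewrite IH; ring. Qed.

Lemma deriv_within_sum_lt D r (F : nat -> R -> R) (F' : nat -> R) x :
  (forall i, (i < r)%nat -> deriv_within D (F i) x (F' i)) ->
  deriv_within D (fun y => sum_lt r (fun i => F i y)) x (sum_lt r F').
Proof.
  induction r as [|r IH]; intros H; simpl.
  - apply deriv_within_const.
  - apply deriv_within_plus; auto.
Qed.

Lemma pow_m1_sqr r : (-1) ^ r * (-1) ^ r = 1.
Proof. rewrite <- pow_add. replace (r + r)%nat with (2 * r)%nat by lia. apply pow_1_even. Qed.

(* Leibniz' rule telescopes: this is integration by parts of [G H^(2r)] moved r times. *)
Lemma deriv_within_alt_sum D (G H : nat -> R -> R) r x :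
  (forall i, (i < r)%nat -> deriv_within D (G i) x (G (S i) x)) ->
  (forall j, (j < 2 * r)%nat -> deriv_within D (H j) x (H (S j) x)) ->
  deriv_within D (fun y => sum_lt r (fun i => (-1) ^ i * G i y * H (2 * r - 1 - i)%nat y)) x
    (G 0%nat x * H (2 * r)%nat x - (-1) ^ r * G r x * H r x).
Proof.
  intros HG HH. eapply deriv_within_eq_val.
  - apply deriv_within_sum_lt with (F' := fun i => (-1) ^ i * G i x * H (S (2 * r - 1 - i)) x
        + H (2 * r - 1 - i)%nat x * ((-1) ^ i * G (S i) x)).
    intros i Hi. apply (deriv_within_mult _ (fun y => (-1) ^ i * G i y)).
    + apply deriv_within_scal, HG, Hi.
    + apply HH; lia.
  - rewrite (sum_lt_ext _ _ (fun i => (-1) ^ i * G i x * H (2 * r - i)%nat x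
                 - (-1) ^ S i * G (S i) x * H (2 * r - S i)%nat x)).
    + rewrite sum_lt_telescope. rewrite Nat.sub_0_r.
      replace (2 * r - r)%nat with r by lia. simpl pow. ring.
    + intros i Hi. replace (S (2 * r - 1 - i)) with (2 * r - i)%nat by lia.
      replace (2 * r - 1 - i)%nat with (2 * r - S i)%nat by lia. simpl pow. ring.
Qed.

Section Fluxes.

Variable f : nat -> R -> R.

(* [x_deriv i] is the i-th derivative [(x f')^(i) = x f^(i+1) + i f^(i)]. *)
Definition x_deriv (i : nat) (y : R) : R := y * f (S i) y + INR i * f i y.

(* Antiderivatives of [(-1)^r f f^(2r) - (f^(r))^2] and of
   [(-1)^r x f' f^(2r) - (r - 1/2) (f^(r))^2]: the multipliers [f] and [x f']
   of the energy and Pohozaev identities. *)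
Definition energy_flux (r : nat) (y : R) : R :=
  (-1) ^ r * sum_lt r (fun i => (-1) ^ i * f i y * f (2 * r - 1 - i)%nat y).

Definition pohozaev_flux (r : nat) (y : R) : R :=
  (-1) ^ r * sum_lt r (fun i => (-1) ^ i * x_deriv i y * f (2 * r - 1 - i)%nat y)
  + / 2 * (y * (f r y * f r y)).

Definition pohozaev_energy (k m : nat) (Lambda y : R) : R :=
  (INR k - / 2) * (energy_flux m y - Lambda * energy_flux k y)
  - (pohozaev_flux m y - Lambda * pohozaev_flux k y).

Variable D : R -> Prop.
Variable N : nat.
Hypothesis Hf : forall j x, (j < N)%nat -> D x -> deriv_within D (f j) x (f (S j) x).

Lemma deriv_within_x_deriv i x : (S i < N)%nat -> D x ->
  deriv_within D (x_deriv i) x (x_deriv (S i) x).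
Proof.
  intros Hi Hx. eapply deriv_within_eq_val.
  - apply deriv_within_plus.
    + apply (deriv_within_mult _ (fun t => t)); [apply deriv_within_id|apply Hf; auto].
    + apply deriv_within_scal, Hf; auto; lia.
  - unfold x_deriv. rewrite S_INR. ring.
Qed.

Lemma deriv_within_energy_flux r x : (2 * r < N)%nat -> D x ->
  deriv_within D (energy_flux r) x ((-1) ^ r * f 0%nat x * f (2 * r)%nat x - f r x * f r x).
Proof.
  intros Hr Hx. eapply deriv_within_eq_val.
  - apply deriv_within_scal, deriv_within_alt_sum; intros j Hj; apply Hf; auto; lia.
  - assert (S2 := pow_m1_sqr r). set (s := (-1) ^ r) in *.
    transitivity (s * f 0%nat x * f (2 * r)%nat x - (s * s) * f r x * f r x); [ring|].
    rewrite S2; ring.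
Qed.

Lemma deriv_within_pohozaev_flux r x : (2 * r < N)%nat -> D x ->
  deriv_within D (pohozaev_flux r) x
    ((-1) ^ r * x * f 1%nat x * f (2 * r)%nat x - (INR r - / 2) * f r x * f r x).
Proof.
  intros Hr Hx. eapply deriv_within_eq_val.
  - apply deriv_within_plus.
    + apply deriv_within_scal, deriv_within_alt_sum.
      * intros i Hi; apply deriv_within_x_deriv; auto; lia.
      * intros j Hj; apply Hf; auto; lia.
    + apply deriv_within_scal, (deriv_within_mult _ (fun t => t)); [apply deriv_within_id|].
      apply deriv_within_mult; apply Hf; auto; lia.
  - unfold x_deriv. simpl INR.
    assert (S2 := pow_m1_sqr r). set (s := (-1) ^ r) in *.
    transitivity (s * x * f 1%nat x * f (2 * r)%nat x
       - (s * s) * (x * f (S r) x + INR r * f r x) * f r x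
       + / 2 * (x * (f r x * f (S r) x + f r x * f (S r) x) + f r x * f r x * 1)); [ring|].
    rewrite S2. field.
Qed.

(* The Pohozaev combination kills the [Lambda (f^(k))^2] terms, leaving the
   equation times a multiplier plus a square with a positive weight. *)
Lemma deriv_within_pohozaev_energy k m Lambda x :
  (2 * m < N)%nat -> (k <= m)%nat -> D x ->
  deriv_within D (pohozaev_energy k m Lambda) x
    (((INR k - / 2) * f 0%nat x - x * f 1%nat x)
       * ((-1) ^ m * f (2 * m)%nat x - Lambda * (-1) ^ k * f (2 * k)%nat x)
     + (INR m - INR k) * (f m x * f m x)).
Proof.
  intros Hm Hk Hx. eapply deriv_within_eq_val.
  - apply deriv_within_minus; [apply deriv_within_scal|];
      (apply deriv_within_minus; [|apply deriv_within_scal]);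
      first [apply deriv_within_energy_flux | apply deriv_within_pohozaev_flux]; auto; lia.
  - ring.
Qed.

Lemma pohozaev_energy_zero k m Lambda y : (k <= m)%nat ->
  (forall j, (j <= m)%nat -> f j y = 0) -> pohozaev_energy k m Lambda y = 0.
Proof.
  intros Hk H0.
  assert (HE : forall r, (r <= m)%nat -> energy_flux r y = 0).
  { intros r Hr. unfold energy_flux. rewrite sum_lt_zero; [ring|].
    intros i Hi. rewrite H0 by lia. ring. }
  assert (HP : forall r, (r <= m)%nat -> pohozaev_flux r y = 0).
  { intros r Hr. unfold pohozaev_flux. rewrite sum_lt_zero; [rewrite H0 by lia; ring|].
    intros i Hi. unfold x_deriv. rewrite (H0 i), (H0 (S i)) by lia. ring. }
  unfold pohozaev_energy. rewrite !HE, !HP by lia. ring.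
Qed.

End Fluxes.

Section Dirichlet.

Variables a b : R.
Hypothesis ab : a < b.
Variable f : nat -> R -> R.
Variable N : nat.
Hypothesis Hf : forall j x, (j < N)%nat -> segment a b x ->
  deriv_within (segment a b) (f j) x (f (S j) x).

Lemma derivs_zero_below m : (m <= N)%nat ->
  (forall x, segment a b x -> f m x = 0) -> (forall j, (j < m)%nat -> f j b = 0) ->
  forall j x, (j <= m)%nat -> segment a b x -> f j x = 0.
Proof.
  intros HmN Hm Hb.
  assert (Hdesc : forall t, (t <= m)%nat -> forall x, segment a b x -> f (m - t)%nat x = 0).
  { induction t as [|t IH]; intros Ht x Hx; [rewrite Nat.sub_0_r; auto|].
    assert (Hd0 : forall y, segment a b y -> deriv_within (segment a b) (f (m - S t)%nat) y 0).
    { intros y Hy. eapply deriv_within_eq_val; [apply Hf; auto; lia|].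
      replace (S (m - S t)) with (m - t)%nat by lia. apply IH; auto; lia. }
    rewrite (segment_const_of_deriv0 a b _ Hd0 x b Hx ltac:(unfold segment; lra)).
    apply Hb; lia. }
  intros j x Hj Hx. replace j with (m - (m - j))%nat by lia. apply Hdesc; auto; lia.
Qed.

Lemma Lop_dirichlet_unique p m Lambda :
  (1 <= p)%nat -> (p <= m)%nat -> (2 * m < N)%nat ->
  (forall j, (j <= m)%nat -> f j a = 0 /\ f j b = 0) ->
  (forall x, segment a b x -> Lop p m Lambda f x = 0) ->
  forall j x, (j <= m)%nat -> segment a b x -> f j x = 0.
Proof.
  intros Hp Hpm HmN Hbd HL.
  remember (m - p)%nat as k eqn:Hk.
  assert (Hkm : (k < m)%nat) by lia.
  assert (HW : forall x, segment a b x ->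
    deriv_within (segment a b) (pohozaev_energy f k m Lambda) x
      ((INR m - INR k) * (f m x * f m x))).
  { intros x Hx. eapply deriv_within_eq_val.
    - apply (deriv_within_pohozaev_energy f _ N Hf); auto; lia.
    - assert (E := HL x Hx). unfold Lop in E.
      replace (2 * m - 2 * p)%nat with (2 * k)%nat in E by lia. rewrite <- Hk in E.
      rewrite E. ring. }
  assert (Hgap : INR k < INR m) by (apply lt_INR, Hkm).
  assert (Hsq : forall x, (INR m - INR k) * (f m x * f m x) = 0 -> f m x = 0).
  { intros x Hx. apply Rmult_integral in Hx as [Hx|Hx]; [lra|].
    apply Rmult_integral in Hx as [Hx|Hx]; exact Hx. }
  assert (Hfm : forall x, segment a b x -> f m x = 0).
  { intros x Hx. apply Hsq.
    apply (segment_deriv_nonneg_zero_ends a b ab _ _ HW); auto.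
    - intros y _. apply Rmult_le_pos; [lra|apply Rle_0_sqr].
    - apply pohozaev_energy_zero; [lia|]. intros j Hj; apply Hbd, Hj.
    - apply pohozaev_energy_zero; [lia|]. intros j Hj; apply Hbd, Hj. }
  apply derivs_zero_below; [lia|exact Hfm|]. intros j Hj; apply Hbd; lia.
Qed.

End Dirichlet.

Lemma limit1_in_reflect c q l x :
  limit1_in q (fun y => segment (- c) c y /\ y <> x) l x ->
  limit1_in (fun y => q (- y)) (fun y => segment (- c) c y /\ y <> - x) l (- x).
Proof.
  intros H eps Heps. destruct (H eps Heps) as [alp [Halp Hclose]].
  exists alp; split; [exact Halp|].
  intros y [[Hy Hne] Hdist]. apply (Hclose (- y)). split; [split|].
  - unfold segment in *; lra.
  - intro E; apply Hne; lra.
  - simpl in *. unfold R_dist in *. replace (- y - x) with (- (y - - x)) by ring.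
    rewrite Rabs_Ropp; exact Hdist.
Qed.

Lemma derivs_parity c z d N : 0 < c ->
  (forall x, segment (- c) c x -> d 0%nat x = z x) ->
  (forall j x, (j < N)%nat -> segment (- c) c x ->
     deriv_within (segment (- c) c) (d j) x (d (S j) x)) ->
  (forall x, segment (- c) c x -> z (- x) = z x) ->
  forall j x, (j <= N)%nat -> segment (- c) c x -> d j (- x) = (-1) ^ j * d j x.
Proof.
  intros Hc H0 Hd Hz. induction j as [|j IH]; intros x Hj Hx;
    assert (Hmx : segment (- c) c (- x)) by (unfold segment in *; lra).
  - rewrite !H0, Hz by auto. simpl; ring.
  - apply (deriv_within_segment_unique (- c) c ltac:(lra) (d j) (- x)); [exact Hmx|apply Hd; auto; lia|].
    assert (L := limit_mul _ _ _ _ _ _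
      (limit_free (fun _ => (-1) ^ S j) (fun y => segment (- c) c y /\ y <> - x) x (- x))
      (limit1_in_reflect c _ _ _ (Hd j x ltac:(lia) Hx))).
    eapply limit1_in_ext; [|exact L]. intros y [Hy Hne]. cbv beta.
    assert (segment (- c) c (- y)) by (unfold segment in *; lra).
    replace (d j y) with (d j (- - y)) by (f_equal; ring).
    rewrite !IH by (auto; lia). simpl pow. field. split; intro E; apply Hne; lra.
Qed.

Lemma deriv_within_Lop D p m Lambda d N x :
  (forall j y, (j < N)%nat -> D y -> deriv_within D (d j) y (d (S j) y)) ->
  (2 * m < N)%nat -> D x ->
  deriv_within D (Lop p m Lambda d) x (Lop p m Lambda (fun j => d (S j)) x).
Proof.
  intros Hd Hm Hx. unfold Lop.
  apply deriv_within_minus; apply deriv_within_scal, Hd; auto; lia.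
Qed.

Lemma Lop_shift2 p m Lambda d x : (p <= m)%nat ->
  Lop p m Lambda (fun j => d (S (S j))) x = - Lop p (S m) Lambda d x.
Proof.
  intros Hpm. unfold Lop.
  replace (2 * S m)%nat with (S (S (2 * m))) by lia.
  replace (S m - p)%nat with (S (m - p)) by lia.
  replace (S (S (2 * m)) - 2 * p)%nat with (S (S (2 * m - 2 * p))) by lia.
  simpl pow. ring.
Qed.

Lemma Lop_even p m Lambda d x : (p <= m)%nat ->
  (forall j, (j <= 2 * m)%nat -> d j (- x) = (-1) ^ j * d j x) ->
  Lop p m Lambda d (- x) = Lop p m Lambda d x.
Proof.
  intros Hpm Hpar. unfold Lop.
  replace (2 * m - 2 * p)%nat with (2 * (m - p))%nat by lia.
  rewrite !Hpar by lia. rewrite !pow_1_even. ring.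
Qed.

Theorem mainTheorem3 (p n : nat) (Lambda : R) (z : R -> R) (d : nat -> R -> R) :
  (1 <= p)%nat -> (p < n)%nat ->
  is_Ck_derivs I11 (2 * n) z d ->
  (forall x, I11 x -> z (- x) = z x) ->
  (forall x, I11 x -> Lop p n Lambda d x = 0) ->
  (forall j, (j < n)%nat -> d j 1 = 0 /\ d j (-1) = 0) ->
  exists c : R,
    (forall x, I11 x -> Lop p (n - 1) Lambda d x = c) /\
    (c = 0 -> forall x, I11 x -> z x = 0).
Proof.
  intros Hp Hpn [Hd0 [Hd _]] Hz HL Hb.
  destruct n as [|m]; [lia|]. replace (S m - 1)%nat with m by lia.
  assert (I1 : I11 1) by (unfold I11; lra).
  assert (Hpar := derivs_parity 1 z d _ Rlt_0_1 Hd0 Hd Hz).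
  destruct (segment_affine_of_deriv2_zero (-1) 1 ltac:(lra)
              (Lop p m Lambda d) (Lop p m Lambda (fun j => d (S j))))
    as [s [c Haff]].
  - intros x Hx. apply (deriv_within_Lop _ _ _ _ _ _ _ Hd); [lia|exact Hx].
  - intros x Hx. eapply deriv_within_eq_val.
    + apply (deriv_within_Lop _ _ _ _ _ (S (2 * m))); [|lia|exact Hx].
      intros j y Hj. apply Hd; lia.
    + cbv beta. rewrite (Lop_shift2 p m Lambda d x), HL by (auto; lia). ring.
  - assert (Hs : s = 0).
    { assert (E := Lop_even p m Lambda d 1 ltac:(lia) (fun j Hj => Hpar j 1 ltac:(lia) I1)).
      rewrite !Haff in E by (unfold I11, segment; lra). lra. }
    exists c. split; [intros x Hx; rewrite Haff by exact Hx; rewrite Hs; ring|].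
    intros Hc x Hx. rewrite <- Hd0 by exact Hx.
    apply (Lop_dirichlet_unique (-1) 1 ltac:(lra) d (2 * S m) Hd p m Lambda); auto; try lia.
    + intros j Hj. destruct (Hb j ltac:(lia)). auto.
    + intros y Hy. rewrite Haff, Hs, Hc by exact Hy. ring.
Qed.
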